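(* Let $G$ be a looped simple graph and $k_1,k_2$ positive integers. The following are equivalent: (1) $G$ is locally equivalent to some looped simple graph $H$ having two distinct nonadjacent vertices of degrees $k_1-1$ and $k_2-1$ with no common neighbor; (2) some transverse matroid of $G$ has two disjoint circuits of sizes $k_1$ and $k_2$ whose union contains no other circuit.
   Context: A looped simple graph is a finite graph in which each vertex carries at most one loop and no two distinct vertices are joined by more than one edge. ''Adjacent''/''neighbors'' refer only to distinct vertices joined by a non-loop edge; the degree of a vertex is its number of neighbors (loops not counted). $A(G)$ is the $V(G)\times V(G)$ matrix over $GF(2)$ with diagonal entry $1$ exactly at looped vertices and off-diagonal entry $1$ exactly for adjacent pairs. $IAS(G)=(I\mid A(G)\mid A(G)+I)$ over $GF(2)$, rows indexed by $V(G)$; the $v$-columns of the three blocks are labelled $\phi_G(v),\chi_G(v),\psi_G(v)$. $M[IAS(G)]$ is the binary column matroid of $IAS(G)$ on $W(G)=\{\phi_G(v),\chi_G(v),\psi_G(v):v\in V(G)\}$. A transversal contains exactly one element of each vertex triple $\{\phi_G(v),\chi_G(v),\psi_G(v)\}$; a transverse matroid of $G$ is the restriction of $M[IAS(G)]$ to a transversal. Local equivalence: $G_\ell^v$ complements the loop status of $v$; $G_s^v$ complements the adjacency status of every pair of distinct neighbors of $v$; $G_{ns}^v$ does this and also complements the loop status of every neighbor of $v$. $H$ is locally equivalent to $G$ if obtained from $G$ by a finite sequence of such operations. *)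

From HB Require Import structures.
From mathcomp Require Import all_boot all_order all_algebra.
Set Implicit Arguments. Unset Strict Implicit. Unset Printing Implicit Defensive.
Import GRing.Theory.
Local Open Scope ring_scope.

Record lsgraph (n : nat) := LSG { loops : {set 'I_n}; edges : {set {set 'I_n}} }.

Definition wf_lsgraph n (G : lsgraph n) : Prop :=
  forall e, e \in edges G -> #|e| = 2%N.

Definition adjacent n (G : lsgraph n) (x y : 'I_n) : bool :=
  (x != y) && ([set x; y] \in edges G).

Definition nbhd n (G : lsgraph n) (v : 'I_n) : {set 'I_n} :=
  [set w | adjacent G v w].

Definition degree n (G : lsgraph n) (v : 'I_n) : nat := #|nbhd G v|.

Definition setXor (T : finType) (A B : {set T}) : {set T} := (A :\: B) :|: (B :\: A).

Definition nbr_pairs n (G : lsgraph n) (v : 'I_n) : {set {set 'I_n}} :=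
  [set [set x; y] | x in nbhd G v, y in nbhd G v & x != y].

Definition loc_l n (G : lsgraph n) (v : 'I_n) : lsgraph n :=
  LSG (setXor (loops G) [set v]) (edges G).
Definition loc_s n (G : lsgraph n) (v : 'I_n) : lsgraph n :=
  LSG (loops G) (setXor (edges G) (nbr_pairs G v)).
Definition loc_ns n (G : lsgraph n) (v : 'I_n) : lsgraph n :=
  LSG (setXor (loops G) (nbhd G v)) (setXor (edges G) (nbr_pairs G v)).

Inductive loc_equiv n (G : lsgraph n) : lsgraph n -> Prop :=
| loc_refl : loc_equiv G G
| loc_step_l H v : loc_equiv G H -> loc_equiv G (loc_l H v)
| loc_step_s H v : loc_equiv G H -> loc_equiv G (loc_s H v)
| loc_step_ns H v : loc_equiv G H -> loc_equiv G (loc_ns H v).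

Definition adjmx n (G : lsgraph n) : 'M['F_2]_n :=
  \matrix_(i, j) (if i == j then (i \in loops G)%:R else (adjacent G i j)%:R).

Definition IAS n (G : lsgraph n) : 'M['F_2]_(n, n + n + n) :=
  row_mx (row_mx 1%:M (adjmx G)) (adjmx G + 1%:M).

Definition phiG n (v : 'I_n) : 'I_(n + n + n) := lshift n (lshift n v).
Definition chiG n (v : 'I_n) : 'I_(n + n + n) := lshift n (rshift n v).
Definition psiG n (v : 'I_n) : 'I_(n + n + n) := rshift (n + n) v.

Definition ias_transversal n (T : {set 'I_(n + n + n)}) : Prop :=
  forall v : 'I_n, #|T :&: [set phiG v; chiG v; psiG v]| = 1%N.

Definition dependent m k (M : 'M['F_2]_(m, k)) (C : {set 'I_k}) : Prop :=
  exists x : 'cV['F_2]_k,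
    [/\ x != 0, (forall j, j \notin C -> x j 0 = 0) & M *m x = 0].

Definition circuit_restr m k (M : 'M['F_2]_(m, k)) (T C : {set 'I_k}) : Prop :=
  [/\ C \subset T, dependent M C & forall D : {set 'I_k}, D \proper C -> ~ dependent M D].

(* Loop toggling and local complementation change IAS(G) only by row operations and by
   exchanging, at a single vertex, two of the columns phi, chi, psi; so they preserve the
   transverse matroids up to this relabelling, and condition (2) is invariant under local
   equivalence.  If H has vertices a, b as in (1), let kappa(v) be chi(v) or psi(v) as v is
   unlooped or looped.  The neighbourhood circuits {kappa(a)} + phi(N(a)) and
   {kappa(b)} + phi(N(b)) lie in the transversal picking kappa at a, b and phi elsewhere,
   and every kernel vector supported on their union is a combination of their indicator
   vectors.  Conversely, mark a in C1 and b in C2, and count the non-phi elements of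
   C1 + C2 other than a and b.  These elements form an independent set, hence contain no
   neighbourhood circuit, and this provides a vertex at which one or two local
   complementations lower the count.  When it reaches zero, C1 and C2 are the
   neighbourhood circuits of the vertices of a and b, which gives (1). *)

From mathcomp Require Import all_boot all_order all_algebra.
Set Implicit Arguments. Unset Strict Implicit. Unset Printing Implicit Defensive.
Import GRing.Theory.
Local Open Scope ring_scope.

Lemma F2P (x : 'F_2) : x = 0 \/ x = 1.
Proof. by case: x => [[|[|m]] Hm]; [left; exact/val_inj | right; exact/val_inj | ]. Qed.

Lemma F2_addxx (x : 'F_2) : x + x = 0.
Proof. by case: (F2P x) => ->; apply/eqP. Qed.

Lemma F2_add_eq0 (x y : 'F_2) : x + y = 0 -> x = y.
Proof. by case: (F2P x) => ->; case: (F2P y) => -> /eqP. Qed.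

Lemma sum_mulr_delta (R : pzSemiRingType) (I : finType) (F : I -> R) u :
  \sum_k F k * (k == u)%:R = F u.
Proof.
rewrite (bigD1 u) //= eqxx mulr1 big1 ?addr0 // => k /negbTE ->.
by rewrite mulr0.
Qed.

Ltac F2_cases x := case: (F2P x) => ->.

Section Circuits.
Variables m k : nat.
Implicit Types (M : 'M['F_2]_(m, k)) (T C D : {set 'I_k}) (x : 'cV['F_2]_k).

Lemma dependentS M C D : C \subset D -> dependent M C -> dependent M D.
Proof.
move=> sCD [x [nz supp Mx]]; exists x; split => // j jD; apply: supp.
by apply: contra jD; apply: (subsetP sCD).
Qed.

Lemma circuit_minimal M T C D : circuit_restr M T C -> dependent M D -> D \subset C -> D = C.
Proof.
move=> [_ _ minC] depD sDC; apply/eqP; apply: contraT => neDC.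
by case: (minC D); rewrite // properEneq neDC.
Qed.

Lemma circuit_support M T C x : circuit_restr M T C ->
  x != 0 -> (forall j, j \notin C -> x j 0 = 0) -> M *m x = 0 -> C = [set j | x j 0 != 0].
Proof.
move=> cC nz supp Mx; apply/esym/(circuit_minimal cC).
  by exists x; split => // j; rewrite inE negbK => /eqP.
by apply/subsetP => j; rewrite inE; apply: contraR => /supp ->.
Qed.

Definition dependentb M C : bool :=
  [exists x : 'cV['F_2]_k, [&& x != 0, [forall j, (j \notin C) ==> (x j 0 == 0)] & M *m x == 0]].

Lemma dependentP M C : reflect (dependent M C) (dependentb M C).
Proof.
apply: (iffP existsP) => [[x /and3P [nz /forallP supp /eqP Mx]] | [x [nz supp Mx]]].
- by exists x; split => // j /(implyP (supp j)) /eqP.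
- exists x; rewrite nz Mx eqxx andbT; apply/forallP => j.
  by apply/implyP => /supp ->.
Qed.

Lemma dependent_has_circuit M T D : D \subset T -> dependent M D ->
  exists2 C : {set 'I_k}, C \subset D & circuit_restr M T C.
Proof.
have [N] := ubnP #|D|; elim: N D => // N IH D ltDN sDT depD.
case: (pickP [pred D' : {set 'I_k} | (D' \proper D) && dependentb M D']) => [D' | noD'].
- case/andP => ltD'D /dependentP depD'.
  have [C sCD' cC] := IH D' (leq_trans (proper_card ltD'D) (ltnSE ltDN))
    (subset_trans (proper_sub ltD'D) sDT) depD'.
  by exists C => //; apply: subset_trans sCD' (proper_sub ltD'D).
- exists D => //; split => // D' ltD'D /dependentP depD'.
  by have := noD' D'; rewrite /= ltD'D depD'.
Qed.

End Circuits.

Section Coordinates.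
Variable n : nat.
Implicit Types (v w : 'I_n) (j : 'I_(n + n + n)) (A : 'M['F_2]_n).

Definition ias_col (k : nat) v : 'I_(n + n + n) :=
  if k == 0%N then phiG v else if k == 1%N then chiG v else psiG v.

Definition col_vtx j : 'I_n :=
  match split j with inl j1 => match split j1 with inl v | inr v => v end | inr v => v end.

Definition col_kind j : nat :=
  match split j with inl j1 => match split j1 with inl _ => 0 | inr _ => 1 end | inr _ => 2 end.

Lemma col_kind_lt3 j : (col_kind j < 3)%N.
Proof. by rewrite /col_kind; case: (split j) => // j1; case: (split j1). Qed.

Lemma ias_colK j : ias_col (col_kind j) (col_vtx j) = j.
Proof.
rewrite /col_kind /col_vtx; have := splitK j; case: (split j) => [j1|v] <- //.
by have := splitK j1; case: (split j1) => [v|v] <-.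
Qed.

Lemma col_vtx_ias k v : col_vtx (ias_col k v) = v.
Proof.
rewrite /col_vtx /ias_col /phiG /chiG /psiG.
by case: ifP => _; last case: ifP => _; rewrite !(unsplitK (inl _), unsplitK (inr _)).
Qed.

Lemma col_kind_ias k v : (k < 3)%N -> col_kind (ias_col k v) = k.
Proof.
rewrite /col_kind /ias_col /phiG /chiG /psiG.
by case: k => [|[|[|k]]] // _ /=; rewrite !(unsplitK (inl _), unsplitK (inr _)).
Qed.

Lemma eq_ias_col j k v : (k < 3)%N ->
  (j == ias_col k v) = (col_kind j == k) && (col_vtx j == v).
Proof.
move=> hk; apply/eqP/andP => [->|[/eqP <- /eqP <-]]; last by rewrite ias_colK.
by rewrite col_kind_ias // col_vtx_ias.
Qed.

Lemma col_kind_vtx_inj j j' : col_kind j = col_kind j' -> col_vtx j = col_vtx j' -> j = j'.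
Proof. by move=> ek ev; rewrite -(ias_colK j) -(ias_colK j') ek ev. Qed.

Lemma ias_col0_inj : injective (ias_col 0).
Proof. by move=> v w /(congr1 col_vtx); rewrite !col_vtx_ias. Qed.

Lemma mem_vertex_triple v j : (j \in [set phiG v; chiG v; psiG v]) = (col_vtx j == v).
Proof.
rewrite !inE -[phiG v]/(ias_col 0 v) -[chiG v]/(ias_col 1 v) -[psiG v]/(ias_col 2 v).
rewrite !eq_ias_col //; have := col_kind_lt3 j.
by case: (col_kind j) => [|[|[|]]] //=; rewrite ?orbF.
Qed.

Definition coord (x : 'cV['F_2]_(n + n + n)) (k : nat) v := x (ias_col k v) 0.

Definition ias_mx A : 'M['F_2]_(n, n + n + n) := row_mx (row_mx 1%:M A) (A + 1%:M).

(* Row [i] of [ias_mx A *m x], in terms of the kind-indexed coordinates [f] of [x]. *)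
Definition ias_row A (f : nat -> 'I_n -> 'F_2) i : 'F_2 :=
  f 0%N i + f 2%N i + \sum_k A i k * (f 1%N k + f 2%N k).

Definition ias_ker A f : Prop := forall i, ias_row A f i = 0.

Lemma ias_ker_ext A f g : (forall k v, (k < 3)%N -> f k v = g k v) ->
  ias_ker A f -> ias_ker A g.
Proof.
move=> fg Kf i; rewrite /ias_row -!fg //; under eq_bigr => k _ do rewrite -!fg //.
exact: Kf.
Qed.

Lemma mul_ias_mx_eq0 A x : ias_mx A *m x = 0 <-> ias_ker A (coord x).
Proof.
rewrite -[x]vsubmxK -[usubmx x]vsubmxK /ias_mx !mul_row_col mul1mx mulmxDl mul1mx.
move: (usubmx (usubmx x)) (dsubmx (usubmx x)) (dsubmx x) => p c s.
have -> : p + A *m c + (A *m s + s) = p + s + A *m (c + s).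
  by rewrite mulmxDr [A *m s + s]addrC addrACA.
have coordE i : [/\ coord (col_mx (col_mx p c) s) 0 i = p i 0,
                    coord (col_mx (col_mx p c) s) 1 i = c i 0 &
                    coord (col_mx (col_mx p c) s) 2 i = s i 0].
  by rewrite /coord /ias_col /= /phiG /chiG /psiG !(col_mxEu, col_mxEd).
have rowE i : (p + s + A *m (c + s)) i 0 =
    p i 0 + s i 0 + \sum_k A i k * (c k 0 + s k 0).
  by rewrite !mxE; congr (_ + _); apply: eq_bigr => k _; rewrite !mxE.
split => [K i | K]; rewrite /ias_row.
- have [-> _ ->] := coordE i; under eq_bigr => k _ do have [_ -> ->] := coordE k.
  by rewrite -rowE K mxE.
- apply/matrixP => i j; rewrite (ord1 j) rowE mxE -[RHS](K i) /ias_row.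
  have [-> _ ->] := coordE i; congr (_ + _).
  by apply: eq_bigr => k _; have [_ -> ->] := coordE k.
Qed.

End Coordinates.

Section Relabel.
Variable n : nat.
Implicit Types (M : 'M['F_2]_(n, n + n + n)) (S U T C D : {set 'I_(n + n + n)}).

Definition kind_invol (pi : 'I_n -> nat -> nat) : Prop :=
  forall v k, (k < 3)%N -> (pi v k < 3)%N /\ pi v (pi v k) = k.

Definition relabel pi (j : 'I_(n + n + n)) := ias_col (pi (col_vtx j) (col_kind j)) (col_vtx j).

Definition relabel_vec pi (x : 'cV['F_2]_(n + n + n)) : 'cV['F_2]_(n + n + n) :=
  \col_j x (relabel pi j) 0.

(* Local operations preserve the kernel of [IAS] up to such a relabelling of its columns,
   and with it all circuits of all transverse matroids. *)
Definition ker_relabel M' M pi : Prop :=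
  kind_invol pi /\ forall x, M' *m x = 0 <-> M *m relabel_vec pi x = 0.

Definition isolated_circuits M T C1 C2 : Prop :=
  [/\ ias_transversal T, circuit_restr M T C1, circuit_restr M T C2, [disjoint C1 & C2] &
      forall C, circuit_restr M T C -> C \subset C1 :|: C2 -> C = C1 \/ C = C2].

Definition two_circuits M k1 k2 : Prop :=
  exists T C1 C2, isolated_circuits M T C1 C2 /\ #|C1| = k1 /\ #|C2| = k2.

Variable pi : 'I_n -> nat -> nat.
Hypothesis pi_invol : kind_invol pi.
Local Notation s := (relabel pi).

Lemma col_vtx_relabel j : col_vtx (s j) = col_vtx j.
Proof. exact: col_vtx_ias. Qed.

Lemma col_kind_relabel j : col_kind (s j) = pi (col_vtx j) (col_kind j).
Proof. by rewrite col_kind_ias //; case: (pi_invol (col_vtx j) (col_kind_lt3 j)). Qed.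

Lemma relabelK : involutive s.
Proof.
move=> j; rewrite {1}/relabel col_vtx_relabel col_kind_relabel.
by case: (pi_invol (col_vtx j) (col_kind_lt3 j)) => _ ->; apply: ias_colK.
Qed.

Lemma relabel_vecK : involutive (relabel_vec pi).
Proof. by move=> x; apply/matrixP => i j; rewrite (ord1 j) !mxE relabelK. Qed.

Lemma mem_relabel S j : (j \in s @: S) = (s j \in S).
Proof.
apply/imsetP/idP => [[y yS ->]|sjS]; first by rewrite relabelK.
by exists (s j); rewrite ?relabelK.
Qed.

Lemma relabel_setK S : s @: (s @: S) = S.
Proof. by apply/setP => j; rewrite !mem_relabel relabelK. Qed.

Lemma relabel_subset S U : (s @: S \subset s @: U) = (S \subset U).
Proof.
apply/idP/idP => sSU; last exact: imsetS.
by rewrite -(relabel_setK S) -(relabel_setK U) imsetS.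
Qed.

Lemma relabel_proper S U : (s @: S \proper s @: U) = (S \proper U).
Proof. by rewrite /proper !relabel_subset. Qed.

Lemma card_relabel S : #|s @: S| = #|S|.
Proof. exact/card_imset/(can_inj relabelK). Qed.

Lemma relabel_disjoint S U : [disjoint s @: S & s @: U] = [disjoint S & U].
Proof. by rewrite -!setI_eq0 -imsetI ?imset_eq0 //; move=> ? ? _ _; apply: (can_inj relabelK). Qed.

Lemma transversal_relabel T : ias_transversal T -> ias_transversal (s @: T).
Proof.
move=> tT v; rewrite -(tT v) -(card_relabel (T :&: _)); apply: eq_card => j.
by rewrite mem_relabel !in_setI !mem_vertex_triple col_vtx_relabel mem_relabel.
Qed.

Lemma ker_relabel_sym M' M : ker_relabel M' M pi -> ker_relabel M M' pi.
Proof.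
move=> [_ KM]; split=> // y; rewrite -{1}(relabel_vecK y).
by split => /KM.
Qed.

Lemma dependent_relabel M' M C : ker_relabel M' M pi -> dependent M' C -> dependent M (s @: C).
Proof.
move=> [_ KM] [x [nz supp Mx]]; exists (relabel_vec pi x); split.
- apply: contra nz => /eqP x0; apply/eqP.
  by rewrite -(relabel_vecK x) x0; apply/matrixP => i j; rewrite !mxE.
- by move=> j; rewrite mem_relabel mxE => /supp.
- exact/KM.
Qed.

Lemma circuit_relabel M' M T C : ker_relabel M' M pi ->
  circuit_restr M' T C -> circuit_restr M (s @: T) (s @: C).
Proof.
move=> R [sCT depC minC]; split; first exact: imsetS.
- exact: dependent_relabel R depC.
- move=> D ltDC depD; apply: (minC (s @: D)); first by rewrite -relabel_proper relabel_setK.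
  by rewrite -(relabel_setK C) in ltDC *; have := dependent_relabel (ker_relabel_sym R) depD.
Qed.

Lemma isolated_circuits_relabel M' M T C1 C2 : ker_relabel M' M pi ->
  isolated_circuits M' T C1 C2 -> isolated_circuits M (s @: T) (s @: C1) (s @: C2).
Proof.
move=> R [tT c1 c2 dj only]; split.
- exact: transversal_relabel.
- exact: circuit_relabel R c1.
- exact: circuit_relabel R c2.
- by rewrite relabel_disjoint.
- move=> C cC sC.
  have cC' : circuit_restr M' T (s @: C).
    by rewrite -(relabel_setK T); apply: circuit_relabel (ker_relabel_sym R) cC.
  have sC' : s @: C \subset C1 :|: C2 by rewrite -(relabel_setK (C1 :|: C2)) relabel_subset imsetU.
  by case: (only _ cC' sC') => <-; [left | right]; rewrite relabel_setK.
Qed.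

Lemma two_circuits_relabel M' M k1 k2 : ker_relabel M' M pi ->
  two_circuits M' k1 k2 -> two_circuits M k1 k2.
Proof.
move=> R [T [C1 [C2 [iso [<- <-]]]]]; exists (s @: T), (s @: C1), (s @: C2).
by rewrite !card_relabel; split => //; apply: isolated_circuits_relabel R iso.
Qed.

End Relabel.

Section LocalOperationsOnKernels.
Variable n : nat.
Implicit Types (A : 'M['F_2]_n) (f : nat -> 'I_n -> 'F_2).

Lemma ker_relabel_ias_mx A' A pi : kind_invol pi ->
  (forall f, ias_ker A' f <-> ias_ker A (fun k v => f (pi v k) v)) ->
  ker_relabel (ias_mx A') (ias_mx A) pi.
Proof.
move=> pi_invol KA; split => // x.
have coordE k v : (k < 3)%N -> coord x (pi v k) v = coord (relabel_vec pi x) k v.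
  by move=> hk; rewrite /coord mxE /relabel col_vtx_ias col_kind_ias.
split => /mul_ias_mx_eq0 K; apply/mul_ias_mx_eq0.
- by move/KA: K; apply: ias_ker_ext => k v hk; rewrite coordE.
- by apply/KA; move: K; apply: ias_ker_ext => k v hk; rewrite coordE.
Qed.

Lemma sum_diag_mx i (c : 'F_2) (y : 'I_n -> 'F_2) :
  \sum_k ((i == k)%:R * c) * y k = c * y i.
Proof.
under eq_bigr => k _ do rewrite mulrAC mulrC eq_sym [_%:R * _]mulrC mulrA.
by rewrite sum_mulr_delta.
Qed.

Definition swap_chi_psi (d : 'I_n -> bool) v (k : nat) : nat :=
  if d v then (if k == 1%N then 2%N else if k == 2%N then 1%N else k) else k.

Lemma swap_chi_psi_invol d : kind_invol (swap_chi_psi d).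
Proof. by move=> v [|[|[|k]]] //; rewrite /swap_chi_psi; case: (d v). Qed.

(* Adding [E_vv] to [A] turns the chi- and psi-columns [A e_v], [(A + 1) e_v] at [v] into
   each other. *)
Lemma ias_ker_toggle_loops A' A (d : 'I_n -> bool) :
  (forall i j, A' i j = A i j + (i == j)%:R * (d i)%:R) ->
  forall f, ias_ker A' f <-> ias_ker A (fun k v => f (swap_chi_psi d v k) v).
Proof.
move=> A'E f.
suff rowE i : ias_row A' f i = ias_row A (fun k v => f (swap_chi_psi d v k) v) i.
  by split => K i; [rewrite -rowE | rewrite rowE].
rewrite /ias_row; under eq_bigr => k _ do rewrite A'E mulrDl.
rewrite big_split /= sum_diag_mx.
have -> : \sum_k A i k * (f (swap_chi_psi d k 1) k + f (swap_chi_psi d k 2) k) =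
          \sum_k A i k * (f 1%N k + f 2%N k).
  by apply: eq_bigr => k _; rewrite /swap_chi_psi; case: (d k) => //=; rewrite addrC.
move: (\sum_(k < n) _) => S; rewrite /swap_chi_psi; case: (d i) => /=.
all: by F2_cases (f 0%N i); F2_cases (f 1%N i); F2_cases (f 2%N i); F2_cases S; apply/eqP.
Qed.

(* Swap phi at [v] with the non-phi kind that the neighbourhood circuit of [v] does not use. *)
Definition swap_phi_at A v w (k : nat) : nat :=
  if w == v then
    if A v v == 1 then (if k == 0%N then 1%N else if k == 1%N then 0%N else k)
    else (if k == 0%N then 2%N else if k == 2%N then 0%N else k)
  else k.

Lemma swap_phi_at_invol A v : kind_invol (swap_phi_at A v).
Proof.
by move=> w [|[|[|k]]] //; rewrite /swap_phi_at; case: (w == v) => //; case: (A v v == 1).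
Qed.

Section Pivot.
Variables (A A' : 'M['F_2]_n) (v : 'I_n) (a : 'I_n -> 'F_2).
Hypotheses (a_v : a v = 0) (A_col_v : forall i, i != v -> A i v = a i)
           (A_row_v : forall j, j != v -> A v j = a j)
           (A'E : forall i j, A' i j = A i j + a i * a j).
Variable f : nat -> 'I_n -> 'F_2.
Let g k w := f (swap_phi_at A v w k) w.
Let y k := f 1%N k + f 2%N k.
Let P := \sum_k a k * y k.
Let D := g 1%N v + g 2%N v + y v.

Let g_off k w : w != v -> g k w = f k w.
Proof. by rewrite /g /swap_phi_at => /negbTE ->. Qed.

Let row'E i : ias_row A' f i = f 0%N i + f 2%N i + \sum_k A i k * y k + a i * P.
Proof.
rewrite /ias_row -[RHS]addrA; congr (_ + _); under eq_bigr => k _ do rewrite A'E mulrDl.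
by rewrite big_split /= /P mulr_sumr; congr (_ + _); apply: eq_bigr => k _; rewrite mulrA.
Qed.

Let rowE i : ias_row A g i = g 0%N i + g 2%N i + \sum_k A i k * y k + A i v * D.
Proof.
rewrite /ias_row -[RHS]addrA; congr (_ + _).
rewrite (bigD1 v) //= [\sum_k A i k * y k](bigD1 v) //=.
under eq_bigr => k kv do rewrite !g_off //.
move: (\sum_(k < n | k != v) _) => X; rewrite /D.
by F2_cases (A i v); F2_cases (g 1%N v + g 2%N v); F2_cases (y v); F2_cases X; apply/eqP.
Qed.

Let sum_row_v : \sum_k A v k * y k = A v v * y v + P.
Proof.
rewrite (bigD1 v) //= /P [\sum_k a k * y k](bigD1 v) //= a_v mul0r add0r.
by congr (_ + _); apply: eq_bigr => k kv; rewrite A_row_v.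
Qed.

Let row'_v : ias_row A' f v = P + D.
Proof.
rewrite row'E sum_row_v a_v mul0r addr0 /D /y /g /swap_phi_at eqxx.
by F2_cases (A v v) => /=; F2_cases P; F2_cases (f 0%N v); F2_cases (f 1%N v);
  F2_cases (f 2%N v); apply/eqP.
Qed.

Let row_v : ias_row A g v = ias_row A' f v.
Proof.
rewrite rowE sum_row_v row'_v /D /y /g /swap_phi_at eqxx.
by F2_cases (A v v) => /=; F2_cases P; F2_cases (f 0%N v); F2_cases (f 1%N v);
  F2_cases (f 2%N v); apply/eqP.
Qed.

Let row'_off i : i != v -> ias_row A' f i = ias_row A g i + a i * ias_row A' f v.
Proof.
move=> iv; rewrite row'E rowE row'_v !g_off // A_col_v //.
move: (f 0%N i + f 2%N i + _) => X.
by F2_cases X; F2_cases (a i); F2_cases P; F2_cases D; apply/eqP.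
Qed.

(* Local complementation at [v] with the loops of the neighbours toggled is the rank-one
   update [A + a a^T]; on kernels it exchanges the phi-column at [v] with another column. *)
Lemma ias_ker_pivot : ias_ker A' f <-> ias_ker A g.
Proof.
split => K i; case: (eqVneq i v) => [-> | iv].
- by rewrite row_v K.
- by have := K i; rewrite row'_off // K mulr0 addr0.
- by rewrite -row_v K.
- by rewrite row'_off // -row_v !K mulr0 addr0.
Qed.
End Pivot.
End LocalOperationsOnKernels.

Section LocalEquivalence.
Variable n : nat.
Implicit Types (G H : lsgraph n) (v w : 'I_n).

Lemma in_setXor (T : finType) (A B : {set T}) x : (x \in setXor A B) = (x \in A) (+) (x \in B).
Proof. by rewrite /setXor !inE; case: (x \in A); case: (x \in B). Qed.

Lemma natr_addb (b1 b2 : bool) : ((b1 (+) b2)%:R : 'F_2) = b1%:R + b2%:R.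
Proof. by case: b1; case: b2 => //=; apply/eqP. Qed.

Lemma natr_andb (b1 b2 : bool) : ((b1 && b2)%:R : 'F_2) = b1%:R * b2%:R.
Proof. by case: b1; case: b2; rewrite ?mul1r ?mul0r. Qed.

Lemma adjacent_sym G : symmetric (adjacent G).
Proof. by move=> i j; rewrite /adjacent eq_sym setUC. Qed.

Lemma adjacent_irr G : irreflexive (adjacent G).
Proof. by move=> i; rewrite /adjacent eqxx. Qed.

Lemma adjacent_neq G v w : adjacent G v w -> v != w.
Proof. by apply: contraTneq => ->; rewrite adjacent_irr. Qed.

Lemma mem_nbr_pairs G v i j : i != j ->
  ([set i; j] \in nbr_pairs G v) = adjacent G v i && adjacent G v j.
Proof.
move=> ij; apply/imset2P/andP => [[x y] | [vi vj]].
- rewrite !inE => vx /andP [vy _] eij.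
  have adj_of z : z \in [set x; y] -> adjacent G v z by rewrite !inE => /orP [] /eqP ->.
  by split; apply: adj_of; rewrite -eij !inE eqxx ?orbT.
- by exists i j; rewrite ?inE ?vi ?vj.
Qed.

Lemma adjmx_loop G v : adjmx G v v = (v \in loops G)%:R.
Proof. by rewrite mxE eqxx. Qed.

Lemma adjmx_adjacent G i j : i != j -> adjmx G i j = (adjacent G i j)%:R.
Proof. by rewrite mxE => /negbTE ->. Qed.

Definition adj_vec G v i : 'F_2 := (adjacent G v i)%:R.

Lemma adjmx_loc_l G v i j :
  adjmx (loc_l G v) i j = adjmx G i j + (i == j)%:R * (i == v)%:R.
Proof.
rewrite !mxE; case: (eqVneq i j) => [->|ij] /=; last by rewrite mul0r addr0.
by rewrite mul1r in_setXor inE natr_addb.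
Qed.

Lemma adjmx_loc_ns G v i j :
  adjmx (loc_ns G v) i j = adjmx G i j + adj_vec G v i * adj_vec G v j.
Proof.
rewrite !mxE /adj_vec; case: (eqVneq i j) => [->|ij] /=.
- by rewrite in_setXor natr_addb inE -natr_andb andbb.
- by rewrite /adjacent ij /= in_setXor natr_addb mem_nbr_pairs // natr_andb.
Qed.

Lemma adjmx_loc_s G v i j :
  adjmx (loc_s G v) i j = adjmx (loc_ns G v) i j + (i == j)%:R * (adjacent G v i)%:R.
Proof.
rewrite adjmx_loc_ns !mxE /adj_vec; case: (eqVneq i j) => [->|ij] /=.
- by rewrite mul1r -natr_andb andbb -addrA F2_addxx addr0.
- by rewrite mul0r addr0 /adjacent ij /= in_setXor natr_addb mem_nbr_pairs // natr_andb.
Qed.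

Lemma adj_vec_pivot G v : [/\ adj_vec G v v = 0, forall i, i != v -> adjmx G i v = adj_vec G v i
  & forall j, j != v -> adjmx G v j = adj_vec G v j].
Proof.
split; first by rewrite /adj_vec adjacent_irr.
- by move=> i iv; rewrite adjmx_adjacent // adjacent_sym.
- by move=> j jv; rewrite adjmx_adjacent // eq_sym.
Qed.

Lemma ker_relabel_loc_l G v :
  ker_relabel (IAS (loc_l G v)) (IAS G) (swap_chi_psi (pred1 v)).
Proof.
apply: ker_relabel_ias_mx; first exact: swap_chi_psi_invol.
by apply: ias_ker_toggle_loops => i j; rewrite adjmx_loc_l.
Qed.

Lemma ker_relabel_loc_ns G v :
  ker_relabel (IAS (loc_ns G v)) (IAS G) (swap_phi_at (adjmx G) v).
Proof.
apply: ker_relabel_ias_mx; first exact: swap_phi_at_invol.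
have [a_v Acol Arow] := adj_vec_pivot G v.
exact: ias_ker_pivot a_v Acol Arow (adjmx_loc_ns G v).
Qed.

Lemma ker_relabel_loc_s G v :
  ker_relabel (IAS (loc_s G v)) (IAS (loc_ns G v)) (swap_chi_psi (adjacent G v)).
Proof.
apply: ker_relabel_ias_mx; first exact: swap_chi_psi_invol.
by apply: ias_ker_toggle_loops => i j; rewrite adjmx_loc_s.
Qed.

Lemma two_circuits_loc_equiv G H k1 k2 : loc_equiv G H ->
  two_circuits (IAS H) k1 k2 -> two_circuits (IAS G) k1 k2.
Proof.
elim => // {}H v _ IH cH; apply: IH.
- exact: (two_circuits_relabel (swap_chi_psi_invol _) (ker_relabel_loc_l H v) cH).
- exact: (two_circuits_relabel (swap_phi_at_invol _ v) (ker_relabel_loc_ns H v)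
           (two_circuits_relabel (swap_chi_psi_invol _) (ker_relabel_loc_s H v) cH)).
- exact: (two_circuits_relabel (swap_phi_at_invol _ v) (ker_relabel_loc_ns H v) cH).
Qed.

End LocalEquivalence.

Section NeighbourhoodCircuits.
Variable n : nat.
Implicit Types (G : lsgraph n) (u v w : 'I_n) (j : 'I_(n + n + n)).

Definition nbr_kind G u : nat := if u \in loops G then 2 else 1.

Definition apex G u : 'I_(n + n + n) := ias_col (nbr_kind G u) u.

(* Its columns sum to zero: the phi-columns give column [u] of [A(G)] off the diagonal,
   and the apex column is column [u] of [A(G)] or [A(G) + 1], whichever has a zero diagonal. *)
Definition nbhd_circuit G u : {set 'I_(n + n + n)} :=
  apex G u |: [set ias_col 0 w | w in nbhd G u].

Definition char_vec (S : {set 'I_(n + n + n)}) : 'cV['F_2]_(n + n + n) := \col_j (j \in S)%:R.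

Lemma nbr_kind_lt3 G u : (nbr_kind G u < 3)%N.
Proof. by rewrite /nbr_kind; case: ifP. Qed.

Lemma nbr_kind_neq0 G u : nbr_kind G u != 0%N.
Proof. by rewrite /nbr_kind; case: ifP. Qed.

Lemma col_kind_apex G u : col_kind (apex G u) = nbr_kind G u.
Proof. by rewrite col_kind_ias ?nbr_kind_lt3. Qed.

Lemma col_vtx_apex G u : col_vtx (apex G u) = u.
Proof. exact: col_vtx_ias. Qed.

Lemma apex_in_nbhd_circuit G u : apex G u \in nbhd_circuit G u.
Proof. exact: setU11. Qed.

Lemma mem_nbhd_circuit G u j : (j \in nbhd_circuit G u) =
  (col_kind j == nbr_kind G u) && (col_vtx j == u) ||
  (col_kind j == 0%N) && adjacent G u (col_vtx j).
Proof.
rewrite in_setU1 eq_ias_col ?nbr_kind_lt3 //; congr (_ || _).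
apply/imsetP/andP => [[w uw ->] | [/eqP j0 uj]].
- by rewrite col_kind_ias // col_vtx_ias eqxx; move: uw; rewrite inE.
- by exists (col_vtx j); rewrite ?inE // -j0 ias_colK.
Qed.

Lemma nbhd_circuit_cases G u j : j \in nbhd_circuit G u ->
  j = apex G u \/ col_kind j = 0%N /\ col_vtx j != u.
Proof.
rewrite mem_nbhd_circuit => /orP [/andP [/eqP jk /eqP jv] | /andP [/eqP j0 uj]].
- by left; rewrite /apex -jk -jv ias_colK.
- by right; split => //; rewrite eq_sym (adjacent_neq uj).
Qed.

Lemma card_nbhd_circuit G u : #|nbhd_circuit G u| = (degree G u).+1.
Proof.
rewrite cardsU1 card_imset; last exact: ias_col0_inj.
suff -> : apex G u \notin [set ias_col 0 w | w in nbhd G u] by [].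
apply/imsetP => [[w _ /(congr1 (@col_kind n))]].
by rewrite col_kind_apex col_kind_ias //; apply/eqP/nbr_kind_neq0.
Qed.

Lemma ias_ker_nbhd_circuit G u : IAS G *m char_vec (nbhd_circuit G u) = 0.
Proof.
apply/mul_ias_mx_eq0 => i; set x := char_vec _.
have coord0 w : coord x 0 w = (adjacent G u w)%:R.
  rewrite /coord mxE mem_nbhd_circuit col_kind_ias // col_vtx_ias eqxx /=.
  by rewrite eq_sym (negbTE (nbr_kind_neq0 G u)).
have coord12 w : coord x 1 w + coord x 2 w = (w == u)%:R.
  rewrite /coord !mxE !mem_nbhd_circuit !col_kind_ias // !col_vtx_ias /nbr_kind.
  by case: (u \in loops G); case: (w == u); rewrite /= ?addr0 ?add0r.
have coord2 w : coord x 2 w = ((w == u) && (u \in loops G))%:R.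
  rewrite /coord mxE mem_nbhd_circuit col_kind_ias // col_vtx_ias /nbr_kind.
  by case: (u \in loops G); case: (w == u).
rewrite /ias_row; under eq_bigr => k _ do rewrite coord12.
rewrite sum_mulr_delta coord0 coord2.
case: (eqVneq i u) => [-> | iu].
- by rewrite adjacent_irr add0r adjmx_loop F2_addxx.
- by rewrite adjmx_adjacent // adjacent_sym addr0 F2_addxx.
Qed.

Lemma dependent_nbhd_circuit G u : dependent (IAS G) (nbhd_circuit G u).
Proof.
exists (char_vec (nbhd_circuit G u)); split; last exact: ias_ker_nbhd_circuit.
- by apply/eqP => /matrixP /(_ (apex G u) 0); rewrite !mxE apex_in_nbhd_circuit.
- by move=> j /negbTE; rewrite mxE => ->.
Qed.

End NeighbourhoodCircuits.

Section Star.
Variables (n : nat) (G : lsgraph n) (a0 : 'I_(n + n + n)) (x : 'cV['F_2]_(n + n + n)).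
Hypothesis x_ker : IAS G *m x = 0.
Hypothesis x_supp : forall j, x j 0 != 0 ->
  j = a0 \/ col_kind j = 0%N /\ col_vtx j != col_vtx a0.

Let u := col_vtx a0.
Let c := x a0 0.
Let k0 := col_kind a0.
Let A := adjmx G.

Let rows : ias_ker A (coord x). Proof. exact/mul_ias_mx_eq0. Qed.

Let x_off j : j != a0 -> (col_kind j != 0%N) || (col_vtx j == u) -> x j 0 = 0.
Proof.
move=> ja hj; case: (F2P (x j 0)) => // xj1.
have /x_supp [ja' | [j0 ju]] : x j 0 != 0 by rewrite xj1.
- by rewrite ja' eqxx in ja.
- by move: hj; rewrite j0 /= (negbTE ju).
Qed.

Let coord_off k w : (k < 3)%N -> ias_col k w != a0 -> (k != 0%N) || (w == u) -> coord x k w = 0.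
Proof. by move=> hk ja hkw; apply: x_off; rewrite // col_kind_ias // col_vtx_ias. Qed.

Let a0E : a0 = ias_col k0 u. Proof. by rewrite ias_colK. Qed.

Let col_neq_a0 k w : (k < 3)%N -> (k != k0) || (w != u) -> ias_col k w != a0.
Proof. by move=> hk; apply: contraTneq => e; rewrite /k0 /u -e col_kind_ias ?col_vtx_ias ?eqxx. Qed.

Lemma star_phi : k0 = 0%N -> c = 0.
Proof.
move=> k00; have a0_phi : c = coord x 0 u by rewrite /c a0E k00.
have := rows u; rewrite /ias_row -a0_phi coord_off ?col_neq_a0 ?k00 // addr0.
rewrite big1 ?addr0 // => w _.
by rewrite !coord_off ?col_neq_a0 ?k00 ?addr0 ?mulr0.
Qed.

Section NonPhi.
Hypothesis k0_neq0 : k0 != 0%N.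

Let k0_12 : (k0 == 1%N) || (k0 == 2%N).
Proof. by move: k0_neq0 (col_kind_lt3 a0); rewrite /k0; case: (col_kind a0) => [|[|[|]]]. Qed.

Let coord_psi_u : coord x 2 u = (k0 == 2%N)%:R * c.
Proof.
case: (eqVneq k0 2%N) => [k02 | k0n2]; first by rewrite mul1r /c a0E k02.
by rewrite mul0r coord_off ?col_neq_a0 // eq_sym k0n2.
Qed.

Let coord_chi_psi w : coord x 1 w + coord x 2 w = (w == u)%:R * c.
Proof.
case: (eqVneq w u) => [-> | wu]; last by rewrite !coord_off ?col_neq_a0 ?wu ?orbT // addr0 mul0r.
rewrite coord_psi_u mul1r; case/orP: k0_12 => /eqP k0E.
- by rewrite /c a0E k0E mul0r addr0.
- by rewrite k0E mul1r coord_off ?col_neq_a0 ?k0E // add0r.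
Qed.

Let row_sum i : \sum_k A i k * (coord x 1 k + coord x 2 k) = A i u * c.
Proof. by under eq_bigr => k _ do rewrite coord_chi_psi mulrA mulrAC; rewrite sum_mulr_delta. Qed.

Lemma star_row_vtx : ((k0 == 2%N)%:R + A u u) * c = 0.
Proof.
have phi_u : coord x 0 u = 0.
  by apply: coord_off; rewrite ?eqxx ?orbT //; apply: col_neq_a0; rewrite // eq_sym k0_neq0.
by have := rows u; rewrite /ias_row row_sum coord_psi_u phi_u add0r -mulrDl.
Qed.

Lemma star_phi_off w : w != u -> coord x 0 w = A w u * c.
Proof.
move=> wu; have := rows w; rewrite /ias_row row_sum.
by rewrite (coord_off (k := 2)) ?col_neq_a0 ?wu ?orbT // addr0 => /F2_add_eq0.
Qed.

End NonPhi.

Lemma star_kind : c = 1 -> k0 = nbr_kind G u.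
Proof.
move=> c1; have k0n : k0 != 0%N by apply: contra_eqN c1 => /eqP /star_phi ->.
have := star_row_vtx k0n; rewrite c1 mulr1 /A adjmx_loop /nbr_kind.
move: k0n (col_kind_lt3 a0); rewrite /k0.
by case: (col_kind a0) => [|[|[|]]] //; case: (u \in loops G) => // _ _ /eqP.
Qed.

Lemma star_vec : k0 = nbr_kind G u -> forall j, x j 0 = c * (j \in nbhd_circuit G u)%:R.
Proof.
move=> k0E j; have k0n : k0 != 0%N by rewrite k0E nbr_kind_neq0.
have a0_apex : a0 = apex G u by rewrite /apex -k0E a0E.
case: (eqVneq j a0) => [-> | ja].
  by have := apex_in_nbhd_circuit G u; rewrite -a0_apex => ->; rewrite mulr1.
case: (boolP ((col_kind j == 0%N) && (col_vtx j != u))) => [/andP [/eqP j0 ju] | hj].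
- have -> : x j 0 = coord x 0 (col_vtx j) by rewrite /coord -{1}(ias_colK j) j0.
  rewrite (star_phi_off k0n ju) mulrC.
  rewrite /A adjmx_adjacent // mem_nbhd_circuit j0 adjacent_sym.
  by rewrite eq_sym (negbTE (nbr_kind_neq0 G u)).
- rewrite x_off //; last by move: hj; rewrite negb_and negbK.
  case: (boolP (j \in nbhd_circuit G u)) => [/nbhd_circuit_cases [ja' | [j0 ju]] | _].
  + by rewrite ja' -a0_apex eqxx in ja.
  + by move: hj; rewrite j0 ju.
  + by rewrite mulr0.
Qed.

End Star.

Section ConfigurationGivesCircuits.
Variable n : nat.
Implicit Types (G H : lsgraph n) (a b u v w : 'I_n) (T C : {set 'I_(n + n + n)}).

Lemma nbhd_circuit_ker G u (x : 'cV['F_2]_(n + n + n)) : IAS G *m x = 0 ->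
  (forall j, x j 0 != 0 -> j \in nbhd_circuit G u) ->
  forall j, x j 0 = x (apex G u) 0 * (j \in nbhd_circuit G u)%:R.
Proof.
move=> Kx supp; have := @star_vec n G (apex G u) x Kx.
rewrite col_vtx_apex col_kind_apex; apply=> // j /supp.
exact: nbhd_circuit_cases.
Qed.

Lemma circuit_nbhd_circuit G T u : nbhd_circuit G u \subset T ->
  circuit_restr (IAS G) T (nbhd_circuit G u).
Proof.
move=> sNT; split => //; first exact: dependent_nbhd_circuit.
move=> D ltDN [x [nz supp Kx]].
have supp_N j : x j 0 != 0 -> j \in nbhd_circuit G u.
  by move=> xj; apply: (subsetP (proper_sub ltDN)); apply: contraR xj => /supp ->.
have xE := nbhd_circuit_ker Kx supp_N.
have x_apex : x (apex G u) 0 = 1.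
  case: (F2P (x (apex G u) 0)) => // x0; case/eqP: nz.
  by apply/matrixP => j i; rewrite (ord1 i) xE x0 mul0r mxE.
case/andP: ltDN => _ /subsetP []; move=> j jN; apply: contraT => /supp.
by rewrite xE x_apex jN mul1r.
Qed.

Definition star_transversal G a b : {set 'I_(n + n + n)} :=
  [set j | col_kind j == if col_vtx j \in [set a; b] then nbr_kind G (col_vtx j) else 0%N].

Lemma star_transversalP G a b : ias_transversal (star_transversal G a b).
Proof.
move=> v; set k := if v \in [set a; b] then nbr_kind G v else 0%N.
have k_lt3 : (k < 3)%N by rewrite /k; case: ifP; rewrite ?nbr_kind_lt3.
suff -> : star_transversal G a b :&: [set phiG v; chiG v; psiG v] = [set ias_col k v].
  exact: cards1.
apply/setP => j; rewrite in_setI mem_vertex_triple in_set1 eq_ias_col // inE.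
by case: (eqVneq (col_vtx j) v) => [-> | _]; rewrite ?andbT ?andbF.
Qed.

Lemma nbhd_circuit_sub_star G a b u : u \in [set a; b] -> ~~ adjacent G a b ->
  nbhd_circuit G u \subset star_transversal G a b.
Proof.
move=> uab nab; apply/subsetP => j; rewrite mem_nbhd_circuit inE.
case/orP => [/andP [/eqP -> /eqP ->] | /andP [/eqP -> uj]]; first by rewrite uab.
suff -> : col_vtx j \in [set a; b] = false by [].
apply/negbTE/negP; rewrite !inE in uab *.
case/orP => /eqP jE; case/orP: uab => /eqP uE;
  by move: uj nab; rewrite jE uE ?adjacent_irr // adjacent_sym => ->.
Qed.

Section TwoNeighbourhoods.
Variables (G : lsgraph n) (a b : 'I_n).
Hypotheses (neq_ab : a != b) (nadj_ab : ~~ adjacent G a b)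
           (no_common_nbr : forall w, ~~ (adjacent G a w && adjacent G b w)).
Local Notation Na := (nbhd_circuit G a).
Local Notation Nb := (nbhd_circuit G b).

Lemma disjoint_nbhd_circuits : [disjoint Na & Nb].
Proof.
rewrite -setI_eq0; apply/eqP/setP => j; rewrite in_setI in_set0 !mem_nbhd_circuit.
apply/negP => /andP [/orP [/andP [/eqP ka /eqP va] | /andP [/eqP ka aj]]
                    /orP [/andP [/eqP kb /eqP vb] | /andP [/eqP kb bj]]].
- by move: neq_ab; rewrite -va -vb eqxx.
- by move: (nbr_kind_neq0 G a); rewrite -ka kb.
- by move: (nbr_kind_neq0 G b); rewrite -kb ka.
- by move: (no_common_nbr (col_vtx j)); rewrite aj bj.
Qed.

Lemma ker_in_two_nbhd_circuits (x : 'cV['F_2]_(n + n + n)) : IAS G *m x = 0 ->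
  (forall j, x j 0 != 0 -> j \in Na :|: Nb) ->
  forall j, x j 0 = x (apex G a) 0 * (j \in Na)%:R + x (apex G b) 0 * (j \in Nb)%:R.
Proof.
move=> Kx supp; set c := x (apex G a) 0.
pose y := x + c *: char_vec Na.
have yE j : y j 0 = x j 0 + c * (j \in Na)%:R by rewrite !mxE.
have Ky : IAS G *m y = 0 by rewrite mulmxDr -scalemxAr ias_ker_nbhd_circuit scaler0 Kx addr0.
have apex_b_Na : apex G b \notin Na.
  by rewrite (disjointFl disjoint_nbhd_circuits (apex_in_nbhd_circuit G b)).
have y_supp j : y j 0 != 0 -> j = apex G b \/ col_kind j = 0%N /\ col_vtx j != col_vtx (apex G b).
  move=> yj; rewrite col_vtx_apex.
  case: (boolP (j \in Na)) => [ja | jNa]; last first.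
    have /supp : x j 0 != 0 by move: yj; rewrite yE (negbTE jNa) mulr0 addr0.
    by rewrite in_setU (negbTE jNa) => /nbhd_circuit_cases.
  case: (eqVneq j (apex G a)) yj => [-> | ja' _].
    by rewrite yE apex_in_nbhd_circuit mulr1 -/c F2_addxx eqxx.
  move: ja; rewrite mem_nbhd_circuit => /orP [/andP [/eqP jk /eqP jv] | /andP [/eqP j0 aj]].
    by rewrite /apex -jk -jv ias_colK eqxx in ja'.
  by right; split => //; apply: contraNneq nadj_ab => <-.
have := @star_vec n G (apex G b) y Ky y_supp; rewrite col_kind_apex col_vtx_apex => /(_ erefl) y_Nb.
move=> j; have -> : x j 0 = y j 0 + c * (j \in Na)%:R by rewrite yE -addrA F2_addxx addr0.
by rewrite y_Nb yE (negbTE apex_b_Na) mulr0 addr0 addrC.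
Qed.

Lemma circuits_in_two_nbhd_circuits T C : circuit_restr (IAS G) T C -> C \subset Na :|: Nb ->
  C = Na \/ C = Nb.
Proof.
move=> cC sC; have [_ [x [nz supp Kx]] _] := cC.
have xE : forall j, x j 0 = x (apex G a) 0 * (j \in Na)%:R + x (apex G b) 0 * (j \in Nb)%:R.
  by apply: ker_in_two_nbhd_circuits Kx _ => j xj; apply: (subsetP sC); apply: contraR xj => /supp ->.
have CE := circuit_support cC nz supp Kx.
have Na_Nb j : j \in Na -> j \in Nb = false by move/(disjointFr disjoint_nbhd_circuits).
case: (F2P (x (apex G a) 0)) => ca; case: (F2P (x (apex G b) 0)) => cb.
- by case/eqP: nz; apply/matrixP => j i; rewrite (ord1 i) xE ca cb !mul0r addr0 mxE.
- by right; apply/setP => j; rewrite CE inE xE ca cb mul0r mul1r add0r; case: (j \in Nb).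
- by left; apply/setP => j; rewrite CE inE xE ca cb mul0r mul1r addr0; case: (j \in Na).
- have NaC : Na \subset C.
    by apply/subsetP => j ja; rewrite CE inE xE ca cb ja Na_Nb // mul1r mulr0 addr0.
  have apex_b_C : apex G b \in C.
    rewrite CE inE xE ca cb apex_in_nbhd_circuit.
    by rewrite (disjointFl disjoint_nbhd_circuits (apex_in_nbhd_circuit G b)) mulr0 add0r.
  have := circuit_minimal cC (dependent_nbhd_circuit G a) NaC.
  by move=> NaE; have := Na_Nb (apex G b); rewrite NaE apex_b_C apex_in_nbhd_circuit => /(_ isT).
Qed.

End TwoNeighbourhoods.

Lemma two_circuits_of_config H a b k1 k2 : (0 < k1)%N -> (0 < k2)%N ->
  a != b -> ~~ adjacent H a b -> degree H a = k1.-1 -> degree H b = k2.-1 ->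
  (forall w, ~~ (adjacent H a w && adjacent H b w)) -> two_circuits (IAS H) k1 k2.
Proof.
move=> k1_gt0 k2_gt0 ab nab deg_a deg_b no_common.
have sT u : u \in [set a; b] -> nbhd_circuit H u \subset star_transversal H a b.
  by move=> uab; apply: nbhd_circuit_sub_star.
exists (star_transversal H a b), (nbhd_circuit H a), (nbhd_circuit H b).
rewrite !card_nbhd_circuit deg_a deg_b !prednK //; split => //; split.
- exact: star_transversalP.
- by apply/circuit_nbhd_circuit/sT; rewrite !inE eqxx.
- by apply/circuit_nbhd_circuit/sT; rewrite !inE eqxx orbT.
- exact: disjoint_nbhd_circuits.
- by move=> C; apply: circuits_in_two_nbhd_circuits.
Qed.

End ConfigurationGivesCircuits.

Section PhiReduction.
Variable n : nat.
Implicit Types (G H : lsgraph n) (T C : {set 'I_(n + n + n)}) (a b j t : 'I_(n + n + n))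
  (u v w : 'I_n) (M : 'M['F_2]_(n, n + n + n)).

Definition rest C1 C2 a b : {set 'I_(n + n + n)} := (C1 :|: C2) :\: [set a; b].

Definition nonphi_count C1 C2 a b : nat := #|[set j in rest C1 C2 a b | col_kind j != 0%N]|.

Definition marked M T C1 C2 a b : Prop := [/\ isolated_circuits M T C1 C2, a \in C1 & b \in C2].

Lemma transversal_eq T j j' : ias_transversal T -> j \in T -> j' \in T ->
  col_vtx j = col_vtx j' -> j = j'.
Proof.
move=> tT jT j'T jj'; have /eqP/cards1P [z Tz] := tT (col_vtx j).
have : j \in [set z] by rewrite -Tz in_setI jT mem_vertex_triple eqxx.
have : j' \in [set z] by rewrite -Tz in_setI j'T mem_vertex_triple jj' eqxx.
by rewrite !in_set1 => /eqP -> /eqP ->.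
Qed.

Lemma rest_sub M T C1 C2 a b : marked M T C1 C2 a b -> rest C1 C2 a b \subset T.
Proof.
case=> [[_ [sC1 _ _] [sC2 _ _] _ _] _ _]; apply/subsetP => j.
by rewrite !inE => /andP [_ /orP [/(subsetP sC1) | /(subsetP sC2)]].
Qed.

Lemma rest_independent M T C1 C2 a b : marked M T C1 C2 a b -> ~ dependent M (rest C1 C2 a b).
Proof.
move=> mk depX; have [C sCX cC] := dependent_has_circuit (rest_sub mk) depX.
case: mk => [[_ _ _ _ only] aC1 bC2].
have sC : C \subset C1 :|: C2 by apply: subset_trans sCX (subsetDl _ _).
have notin_rest z : z \in [set a; b] -> z \notin rest C1 C2 a b by move=> zab; rewrite in_setD zab.
case: (only C cC sC) => CE; subst C.
- by have := subsetP sCX a aC1; apply/negP/notin_rest; rewrite !inE eqxx.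
- by have := subsetP sCX b bC2; apply/negP/notin_rest; rewrite !inE eqxx orbT.
Qed.

Lemma marked_relabel pi M' M T C1 C2 a b : ker_relabel M' M pi -> marked M' T C1 C2 a b ->
  marked M (relabel pi @: T) (relabel pi @: C1) (relabel pi @: C2) (relabel pi a) (relabel pi b).
Proof.
move=> R [iso aC1 bC2]; have pi_invol := R.1.
by split; rewrite ?mem_relabel ?relabelK //; apply: isolated_circuits_relabel R iso.
Qed.

Lemma rest_relabel pi C1 C2 a b : kind_invol pi ->
  rest (relabel pi @: C1) (relabel pi @: C2) (relabel pi a) (relabel pi b) =
  relabel pi @: rest C1 C2 a b.
Proof.
move=> pi_invol; apply/setP => j; rewrite mem_relabel // !inE !mem_relabel //.
by rewrite !(can2_eq (relabelK pi_invol) (relabelK pi_invol)).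
Qed.

Lemma nonphi_count_relabel pi C1 C2 a b : kind_invol pi ->
  nonphi_count (relabel pi @: C1) (relabel pi @: C2) (relabel pi a) (relabel pi b) =
  #|[set j in rest C1 C2 a b | col_kind (relabel pi j) != 0%N]|.
Proof.
move=> pi_invol; rewrite /nonphi_count rest_relabel // -(card_relabel pi_invol [set j in _ | _]).
by apply: eq_card => j; rewrite !(mem_relabel pi_invol, inE) (relabelK pi_invol).
Qed.

Definition other_kind G u : nat := if u \in loops G then 1 else 2.

Lemma nonphi_kind G j : col_kind j != 0%N ->
  col_kind j = nbr_kind G (col_vtx j) \/ col_kind j = other_kind G (col_vtx j).
Proof.
rewrite /nbr_kind /other_kind; have := col_kind_lt3 j.
by case: (col_kind j) => [|[|[|]]] // _ _; case: (col_vtx j \in loops G); [right | left | left | right].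
Qed.

Lemma other_kind_loc_ns G w v : adjacent G w v -> other_kind (loc_ns G w) v = nbr_kind G v.
Proof. by move=> wv; rewrite /nbr_kind /other_kind /= in_setXor inE wv; case: (v \in loops G). Qed.

Lemma swap_phi_at_other G w : swap_phi_at (adjmx G) w w (other_kind G w) = 0%N.
Proof. by rewrite /swap_phi_at eqxx adjmx_loop /other_kind; case: (w \in loops G). Qed.

Lemma swap_phi_at_nbr G w : swap_phi_at (adjmx G) w w (nbr_kind G w) = nbr_kind G w.
Proof. by rewrite /swap_phi_at eqxx adjmx_loop /nbr_kind; case: (w \in loops G). Qed.

Lemma swap_phi_at_off G w u k : u != w -> swap_phi_at (adjmx G) w u k = k.
Proof. by rewrite /swap_phi_at => /negbTE ->. Qed.

Definition marked_config G0 k1 k2 c : Prop :=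
  exists H T C1 C2 a b, [/\ loc_equiv G0 H, marked (IAS H) T C1 C2 a b,
    nonphi_count C1 C2 a b = c, #|C1| = k1 & #|C2| = k2].

Section Pivoting.
Variables (G0 G : lsgraph n) (T C1 C2 : {set 'I_(n + n + n)}) (a b : 'I_(n + n + n)).
Hypotheses (G0G : loc_equiv G0 G) (mk : marked (IAS G) T C1 C2 a b).
Local Notation X := (rest C1 C2 a b).
Let pivot w := relabel (swap_phi_at (adjmx G) w).

Lemma marked_pivot w : marked (IAS (loc_ns G w)) (pivot w @: T) (pivot w @: C1) (pivot w @: C2)
  (pivot w a) (pivot w b).
Proof.
apply: marked_relabel mk; apply: ker_relabel_sym; first exact: swap_phi_at_invol.
exact: ker_relabel_loc_ns.
Qed.

Let col_kind_pivot w j : col_kind (pivot w j) = swap_phi_at (adjmx G) w (col_vtx j) (col_kind j).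
Proof. exact/col_kind_relabel/swap_phi_at_invol. Qed.

(* Pivoting at [v] turns the [other_kind] column at [v] into the phi column. *)
Lemma pivot_other_kind j0 : j0 \in X -> col_kind j0 = other_kind G (col_vtx j0) ->
  exists2 c, (c < nonphi_count C1 C2 a b)%N & marked_config G0 #|C1| #|C2| c.
Proof.
move=> j0X j0k; move vE : (col_vtx j0) => v.
exists (nonphi_count (pivot v @: C1) (pivot v @: C2) (pivot v a) (pivot v b)); last first.
  exists (loc_ns G v), (pivot v @: T), (pivot v @: C1), (pivot v @: C2), (pivot v a), (pivot v b).
  split => //; [exact: loc_step_ns | exact: marked_pivot |
    by rewrite card_relabel //; apply: swap_phi_at_invol..].
have j0S : j0 \in [set j in X | col_kind j != 0%N].
  by rewrite inE j0X j0k /other_kind; case: ifP.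
have [[tT _ _ _ _] _ _] := mk; have sXT := rest_sub mk.
rewrite nonphi_count_relabel; last exact: swap_phi_at_invol.
apply: leq_trans (proper_card (properD1 j0S)); apply: subset_leq_card.
apply/subsetP => j /setIdP [jX]; rewrite col_kind_pivot => jk.
have jv : col_vtx j != v.
  apply: contraNneq jk => jv.
  have -> : j = j0 by apply: transversal_eq tT (subsetP sXT j jX) (subsetP sXT j0 j0X) (etrans jv (esym vE)).
  by rewrite j0k vE swap_phi_at_other.
rewrite swap_phi_at_off // in jk; apply/setD1P; split; last exact/setIdP.
by apply: contraNneq jv => ->; rewrite vE.
Qed.

Lemma pivot_nbr_kind j0 w : j0 \in X -> col_kind j0 = nbr_kind G (col_vtx j0) ->
  adjacent G (col_vtx j0) w ->
  (forall t, t \in X -> col_vtx t = w -> col_kind t = nbr_kind G w) ->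
  [/\ (nonphi_count (pivot w @: C1) (pivot w @: C2) (pivot w a) (pivot w b) <=
       nonphi_count C1 C2 a b)%N,
      j0 \in rest (pivot w @: C1) (pivot w @: C2) (pivot w a) (pivot w b) &
      col_kind j0 = other_kind (loc_ns G w) (col_vtx j0)].
Proof.
move=> j0X j0k vw X_at_w; have pw_invol := swap_phi_at_invol (adjmx G) w.
have j0w : col_vtx j0 != w by apply: adjacent_neq vw.
split; last by rewrite other_kind_loc_ns // adjacent_sym.
- rewrite nonphi_count_relabel //; apply/subset_leq_card/subsetP => j /setIdP [jX].
  rewrite col_kind_pivot => jk; apply/setIdP; split => //; move: jk.
  case: (eqVneq (col_vtx j) w) => [jw | ?]; last by rewrite swap_phi_at_off.
  by rewrite jw (X_at_w j jX jw) swap_phi_at_nbr.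
- by rewrite rest_relabel // mem_relabel // {1}/relabel swap_phi_at_off // ias_colK.
Qed.

End Pivoting.

Lemma nbhd_circuit_sub G (X : {set 'I_(n + n + n)}) j0 : j0 \in X ->
  col_kind j0 = nbr_kind G (col_vtx j0) ->
  (forall w, adjacent G (col_vtx j0) w ->
     exists2 t, t \in X & col_vtx t = w /\ col_kind t != nbr_kind G w) ->
  (forall t, t \in X -> adjacent G (col_vtx j0) (col_vtx t) -> col_kind t != other_kind G (col_vtx t)) ->
  nbhd_circuit G (col_vtx j0) \subset X.
Proof.
move=> j0X j0k at_nbrs not_other; apply/subsetP => j; rewrite mem_nbhd_circuit.
case/orP => [/andP [/eqP jk /eqP jv] | /andP [/eqP j0' vj]].
  by have -> : j = j0 by apply: col_kind_vtx_inj; rewrite ?jk ?jv ?j0k.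
have [t tX [tv tk]] := at_nbrs _ vj.
have t0 : col_kind t = 0%N.
  apply/eqP; apply: contraT => /(nonphi_kind G) [] tk'.
  - by move: tk; rewrite tk' tv eqxx.
  - by move: (not_other t tX); rewrite tk' tv vj eqxx => /(_ isT).
by have -> : j = t by apply: col_kind_vtx_inj; rewrite ?j0' ?t0 ?tv.
Qed.

Lemma marked_config_reduce G0 k1 k2 c : (0 < c)%N -> marked_config G0 k1 k2 c ->
  exists2 c', (c' < c)%N & marked_config G0 k1 k2 c'.
Proof.
move=> c_gt0 [G [T [C1 [C2 [a [b [G0G mk cE <- <-]]]]]]]; subst c.
have [j0 /setIdP [j0X j0nphi]] := card_gt0P c_gt0.
have [j0k | j0k] := nonphi_kind G j0nphi; last exact: (pivot_other_kind G0G mk j0X j0k).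
set X := rest C1 C2 a b in j0X.
case: (boolP [exists w, adjacent G (col_vtx j0) w &&
    [forall t in X, (col_vtx t == w) ==> (col_kind t == nbr_kind G w)]]).
  case/existsP => w /andP [vw /forall_inP X_at_w].
  have [|le_count j0X' j0k'] := pivot_nbr_kind j0X j0k vw.
    by move=> t tX tw; apply/eqP; move: (X_at_w t tX); rewrite tw eqxx.
  have [c' lt_c' cfg] := pivot_other_kind (loc_step_ns w G0G) (marked_pivot mk w) j0X' j0k'.
  rewrite !(card_relabel (swap_phi_at_invol _ w)) in cfg.
  by exists c' => //; apply: leq_trans lt_c' le_count.
move/existsPn => no_w.
case: (boolP [exists t in X, adjacent G (col_vtx j0) (col_vtx t) &&
    (col_kind t == other_kind G (col_vtx t))]).
  by case/exists_inP => t tX /andP [_ /eqP tk]; exact: (pivot_other_kind G0G mk tX tk).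
move/exists_inPn => no_t; case: (rest_independent mk).
apply: dependentS (dependent_nbhd_circuit G (col_vtx j0)).
apply: nbhd_circuit_sub => // [w vw | t tX vt].
- have := no_w w; rewrite vw /= negb_forall_in => /exists_inP [t tX].
  by rewrite negb_imply => /andP [/eqP tw tk]; exists t.
- by have := no_t t tX; rewrite vt.
Qed.

Lemma marked_config_phi G0 k1 k2 c : marked_config G0 k1 k2 c -> marked_config G0 k1 k2 0.
Proof.
elim/ltn_ind: c => c IH cfg; case: (posnP c) => [c0 | c_gt0]; first by rewrite -c0.
by have [c' lt_c'c cfg'] := marked_config_reduce c_gt0 cfg; apply: IH lt_c'c cfg'.
Qed.

Lemma circuit_of_phi_rest H T C a : ias_transversal T -> circuit_restr (IAS H) T C ->
  a \in C -> (forall j, j \in C -> j != a -> col_kind j = 0%N) ->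
  C = nbhd_circuit H (col_vtx a).
Proof.
move=> tT cC aC phi_rest; have [sCT [x [nz supp Kx]] _] := cC.
have CE := circuit_support cC nz supp Kx.
have x_supp j : x j 0 != 0 -> j = a \/ col_kind j = 0%N /\ col_vtx j != col_vtx a.
  move=> xj; have jC : j \in C by rewrite CE inE.
  case: (eqVneq j a) => [-> | ja]; [by left | right; split; first exact: phi_rest].
  apply: contra ja => /eqP jaE; apply/eqP.
  exact: transversal_eq tT (subsetP sCT _ jC) (subsetP sCT _ aC) jaE.
have xa : x a 0 = 1 by move: aC; rewrite CE inE; case: (F2P (x a 0)) => ->.
have ak := star_kind Kx x_supp xa.
apply/setP => j; rewrite CE inE (star_vec Kx x_supp ak) xa mul1r.
by case: (j \in _).
Qed.

Lemma config_of_marked H T C1 C2 a b : marked (IAS H) T C1 C2 a b ->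
  nonphi_count C1 C2 a b = 0%N ->
  [/\ col_vtx a != col_vtx b, ~~ adjacent H (col_vtx a) (col_vtx b),
      degree H (col_vtx a) = #|C1|.-1, degree H (col_vtx b) = #|C2|.-1 &
      forall w, ~~ (adjacent H (col_vtx a) w && adjacent H (col_vtx b) w)].
Proof.
move=> [[tT c1 c2 dj _] aC1 bC2] /cards0_eq count0.
have phi_rest j : j \in C1 :|: C2 -> j != a -> j != b -> col_kind j = 0%N.
  move=> jC ja jb; apply/eqP; apply: contraT => jk.
  have : j \in [set j in rest C1 C2 a b | col_kind j != 0%N].
    by rewrite in_set /rest in_setD jC in_set2 (negbTE ja) (negbTE jb) jk.
  by rewrite count0 in_set0.
have C1E : C1 = nbhd_circuit H (col_vtx a).
  apply: circuit_of_phi_rest tT c1 aC1 _ => j jC1 ja; apply: phi_rest; rewrite ?inE ?jC1 //.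
  by apply: contraTneq jC1 => ->; rewrite (disjointFl dj bC2).
have C2E : C2 = nbhd_circuit H (col_vtx b).
  apply: circuit_of_phi_rest tT c2 bC2 _ => j jC2 jb; apply: phi_rest; rewrite ?inE ?jC2 ?orbT //.
  by apply: contraTneq jC2 => ->; rewrite (disjointFr dj aC1).
have [[sC1T _ _] [sC2T _ _]] := (c1, c2).
have phi_in_C2 w : ias_col 0 w \in C1 -> w = col_vtx b -> ias_col 0 w \in C2.
  move=> wC1 wb; suff -> : ias_col 0 w = b by [].
  by apply: transversal_eq tT (subsetP sC1T _ wC1) (subsetP sC2T _ bC2) _; rewrite col_vtx_ias.
have phi_nbr u w : adjacent H u w -> ias_col 0 w \in nbhd_circuit H u.
  by move=> uw; rewrite mem_nbhd_circuit col_kind_ias // col_vtx_ias uw eqxx orbT.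
split.
- apply/eqP => ab; move: (aC1).
  by rewrite (transversal_eq tT (subsetP sC1T _ aC1) (subsetP sC2T _ bC2) ab) (disjointFl dj bC2).
- apply/negP => ab; have bC1 : ias_col 0 (col_vtx b) \in C1 by rewrite C1E phi_nbr.
  by have := disjointFl dj (phi_in_C2 _ bC1 erefl); rewrite bC1.
- by rewrite C1E card_nbhd_circuit.
- by rewrite C2E card_nbhd_circuit.
- move=> w; apply/negP => /andP [aw bw].
  have wC1 : ias_col 0 w \in C1 by rewrite C1E phi_nbr.
  have wC2 : ias_col 0 w \in C2 by rewrite C2E phi_nbr.
  by rewrite (disjointFl dj wC2) in wC1.
Qed.

End PhiReduction.

Local Close Scope ring_scope.
Unset Implicit Arguments.

Theorem corollary6p1 (n : nat) (G : lsgraph n) (k1 k2 : nat) :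
  wf_lsgraph G -> (0 < k1)%N -> (0 < k2)%N ->
  ((exists H : lsgraph n, loc_equiv G H /\
      exists a b : 'I_n,
        [/\ a != b, ~~ adjacent H a b,
            degree H a = k1.-1, degree H b = k2.-1 &
            forall w, ~~ (adjacent H a w && adjacent H b w)])
   <->
   (exists T : {set 'I_(n + n + n)}, ias_transversal T /\
      exists C1 C2 : {set 'I_(n + n + n)},
        [/\ circuit_restr (IAS G) T C1, circuit_restr (IAS G) T C2,
            [disjoint C1 & C2], #|C1| = k1 /\ #|C2| = k2 &
            forall C, circuit_restr (IAS G) T C -> C \subset C1 :|: C2 ->
              C = C1 \/ C = C2])).
Proof.
move=> _ k1_gt0 k2_gt0; split.
- move=> [H [GH [a [b [ab nab deg_a deg_b no_common]]]]].
  have := two_circuits_of_config k1_gt0 k2_gt0 ab nab deg_a deg_b no_common.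
  move=> /(two_circuits_loc_equiv GH) [T [C1 [C2 [[tT c1 c2 dj only] sizes]]]].
  by exists T; split => //; exists C1, C2.
- move=> [T [tT [C1 [C2 [c1 c2 dj [s1 s2] only]]]]]; subst k1 k2.
  have [a aC1] : exists a : 'I_(n + n + n), a \in C1 by apply/card_gt0P.
  have [b bC2] : exists b : 'I_(n + n + n), b \in C2 by apply/card_gt0P.
  have cfg : marked_config G #|C1| #|C2| (nonphi_count C1 C2 a b).
    by exists G, T, C1, C2, a, b; split => //; apply: loc_refl.
  have [H [T' [D1 [D2 [a' [b' [GH mk count0 <- <-]]]]]]] := marked_config_phi cfg.
  by exists H; split => //; exists (col_vtx a'), (col_vtx b'); apply: config_of_marked mk count0.
Qed.
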